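(* Assume (C1) and (C2). For any $u\in\mathcal{N}$, $$I(u)=\max_{t\ge0}I(tu).$$
   Context: Fix real numbers $p,q,r$ with $1<p<q$, $\frac p2$ a positive integer, and $r\ge1$, and functions $a,b,c:\mathbb{Z}\to(0,+\infty)$. Conditions: - (C1) There is $b_0>0$ with $b(n)\ge b_0$ for all $n$ and $b(n)\to+\infty$ as $|n|\to\infty$. - (C2) There is $c_0>0$ with $c(n)\le c_0$ for all $n$ and $\sum_n c(n)<+\infty$. Notation and spaces: - $\Delta u(n)=u(n+1)-u(n)$. - $E$ is the set of real sequences $u$ with $\|u\|:=\big(\sum_n[a(n)|\Delta u(n)|^p+b(n)|u(n)|^p]\big)^{1/p}<\infty$. - $\mathcal{D}=\{u\in E:\sum_n c(n)|u(n)|^q\ln|u(n)|^r<+\infty\}$, where terms with $u(n)=0$ are read as $0$. For $u,v\in\mathcal{D}$: - $I(u)=\frac1p\|u\|^p+\frac{r}{q^2}\sum_n c(n)|u(n)|^q-\frac1q\sum_n c(n)|u(n)|^q\ln|u(n)|^r$. - $\langle I'(u),v\rangle=\sum_n[a(n)|\Delta u(n)|^{p-2}\Delta u(n)\Delta v(n)+b(n)|u(n)|^{p-2}u(n)v(n)]-\sum_n c(n)|u(n)|^{q-2}u(n)v(n)\ln|u(n)|^r$. $\mathcal{N}=\{u\in\mathcal{D}:u\ne0,\ \langle I'(u),u\rangle=0\}$. *)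

From Stdlib Require Import Reals Lra ZArith.
From Coquelicot Require Import Coquelicot.
Open Scope R_scope.

Definition abspow (x s : R) : R :=
  if Req_EM_T x 0 then 0 else Rpower (Rabs x) s.

Definition summableZ (f : Z -> R) : Prop :=
  ex_series (fun n : nat => Rabs (f (Z.of_nat n))) /\
  ex_series (fun n : nat => Rabs (f (- Z.of_nat (S n))%Z)).

Definition sumZ (f : Z -> R) : R :=
  Series (fun n : nat => f (Z.of_nat n)) +
  Series (fun n : nat => f (- Z.of_nat (S n))%Z).

Definition Delta (u : Z -> R) (n : Z) : R := u (n + 1)%Z - u n.

Definition scaleZ (t : R) (u : Z -> R) : Z -> R := fun n => t * u n.

Section Functional.
Variables (p q r : R) (a b c : Z -> R).

Definition normE_integrand (u : Z -> R) (n : Z) : R :=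
  a n * abspow (Delta u n) p + b n * abspow (u n) p.

Definition inE (u : Z -> R) : Prop := summableZ (normE_integrand u).

Definition normE (u : Z -> R) : R := abspow (sumZ (normE_integrand u)) (1 / p).

Definition logterm (u : Z -> R) (n : Z) : R :=
  if Req_EM_T (u n) 0 then 0
  else c n * abspow (u n) q * ln (abspow (u n) r).

Definition inD (u : Z -> R) : Prop := inE u /\ summableZ (logterm u).

Definition Ifun (u : Z -> R) : R :=
  1 / p * abspow (normE u) p
  + r / (q * q) * sumZ (fun n => c n * abspow (u n) q)
  - 1 / q * sumZ (logterm u).

Definition Iprime (u v : Z -> R) : R :=
  sumZ (fun n => a n * abspow (Delta u n) (p - 2) * Delta u n * Delta v n
                 + b n * abspow (u n) (p - 2) * u n * v n)
  - sumZ (fun n => if Req_EM_T (u n) 0 then 0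
                   else c n * abspow (u n) (q - 2) * u n * v n * ln (abspow (u n) r)).

Definition inNehari (u : Z -> R) : Prop :=
  inD u /\ (exists n, u n <> 0) /\ Iprime u u = 0.

End Functional.

From Pilot Require Import Defs.
From Stdlib Require Import Reals Lra Lia ZArith.
From Coquelicot Require Import Coquelicot.
Open Scope R_scope.

(* Along the ray t |-> t u each term of I scales: with A = ||u||^p, C = sum c |u|^q and
   L = sum c |u|^q ln |u|^r,
     I(t u) = |t|^p A / p + |t|^q (r C / q^2 - (L + r C ln |t|) / q),
   and u in N means exactly L = A.  Writing |t| = e^s, the inequality e^x (1 - x) <= 1
   (i.e. e^-x >= 1 - x) bounds this by its value at t = 1.  For t u to stay in D one needs
   C < oo, which follows from |u(n)|^p <= ||u||^p / b0 and c <= c0. *)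

Lemma Series_nonneg (f : nat -> R) :
  (forall n, 0 <= f n) -> ex_series f -> 0 <= Series f.
Proof.
  intros Hf Ef.
  rewrite <- (Rmult_0_l (Series f)), <- Series_scal_l.
  apply Series_le; [|exact Ef].
  intros n; specialize (Hf n); lra.
Qed.

Lemma Series_ge_term (n : nat) (f : nat -> R) :
  (forall k, 0 <= f k) -> ex_series f -> f n <= Series f.
Proof.
  revert f; induction n as [|n IH]; intros f Hf Ef;
    rewrite Series_incr_1 by exact Ef;
    pose proof (proj1 (ex_series_incr_1 f) Ef) as Ef1.
  - pose proof (Series_nonneg _ (fun k => Hf (S k)) Ef1); lra.
  - pose proof (IH _ (fun k => Hf (S k)) Ef1); pose proof (Hf 0%nat); lra.
Qed.

Lemma summableZ_le (f g : Z -> R) :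
  (forall n, Rabs (f n) <= Rabs (g n)) -> summableZ g -> summableZ f.
Proof.
  intros Hfg [Hpos Hneg].
  assert (Habs : forall m, norm (Rabs (f m)) <= Rabs (g m))
    by (intros m; change (Rabs (Rabs (f m)) <= Rabs (g m)); rewrite Rabs_Rabsolu; apply Hfg).
  split; eapply (@ex_series_le R_AbsRing R_CompleteNormedModule).
  - intros n; apply Habs.
  - exact Hpos.
  - intros n; apply Habs.
  - exact Hneg.
Qed.

Lemma summableZ_ext (f g : Z -> R) :
  (forall n, f n = g n) -> summableZ f -> summableZ g.
Proof. intros Hfg; apply summableZ_le; intros n; rewrite Hfg; apply Rle_refl. Qed.

Lemma summableZ_scal (k : R) (f : Z -> R) :
  summableZ f -> summableZ (fun n => k * f n).
Proof.
  intros [Hpos Hneg]; split.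
  - apply (ex_series_ext (fun n => Rabs k * Rabs (f (Z.of_nat n)))).
    + intros n; symmetry; apply Rabs_mult.
    + exact (@ex_series_scal_l R_AbsRing R_NormedModule _ _ Hpos).
  - apply (ex_series_ext (fun n => Rabs k * Rabs (f (- Z.of_nat (S n))%Z))).
    + intros n; symmetry; apply Rabs_mult.
    + exact (@ex_series_scal_l R_AbsRing R_NormedModule _ _ Hneg).
Qed.

Lemma summableZ_plus (f g : Z -> R) :
  summableZ f -> summableZ g -> summableZ (fun n => f n + g n).
Proof.
  intros [F1 F2] [G1 G2].
  assert (Htri : forall m, norm (Rabs (f m + g m)) <= Rabs (f m) + Rabs (g m))
    by (intros m; change (Rabs (Rabs (f m + g m)) <= Rabs (f m) + Rabs (g m));
        rewrite Rabs_Rabsolu; apply Rabs_triang).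
  split; eapply (@ex_series_le R_AbsRing R_CompleteNormedModule).
  - intros n; apply Htri.
  - exact (@ex_series_plus R_AbsRing R_NormedModule _ _ F1 G1).
  - intros n; apply Htri.
  - exact (@ex_series_plus R_AbsRing R_NormedModule _ _ F2 G2).
Qed.

Lemma sumZ_ext (f g : Z -> R) : (forall n, f n = g n) -> sumZ f = sumZ g.
Proof. intros Hfg; unfold sumZ; f_equal; apply Series_ext; intros n; apply Hfg. Qed.

Lemma sumZ_plus (f g : Z -> R) :
  summableZ f -> summableZ g -> sumZ (fun n => f n + g n) = sumZ f + sumZ g.
Proof.
  intros [F1 F2] [G1 G2]; apply ex_series_Rabs in F1, F2, G1, G2.
  unfold sumZ; rewrite !Series_plus by assumption; ring.
Qed.

Lemma sumZ_scal (k : R) (f : Z -> R) : sumZ (fun n => k * f n) = k * sumZ f.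
Proof. unfold sumZ; rewrite !Series_scal_l; ring. Qed.

Lemma sumZ_nonneg (f : Z -> R) : (forall n, 0 <= f n) -> summableZ f -> 0 <= sumZ f.
Proof.
  intros Hf [F1 F2]; apply ex_series_Rabs in F1, F2.
  pose proof (Series_nonneg _ (fun n => Hf _) F1).
  pose proof (Series_nonneg _ (fun n => Hf _) F2).
  unfold sumZ; lra.
Qed.

Lemma sumZ_ge_term (f : Z -> R) (n : Z) :
  (forall m, 0 <= f m) -> summableZ f -> f n <= sumZ f.
Proof.
  intros Hf [F1 F2]; apply ex_series_Rabs in F1, F2.
  pose proof (Series_nonneg _ (fun m => Hf _) F1).
  pose proof (Series_nonneg _ (fun m => Hf _) F2).
  unfold sumZ; destruct (Z_le_gt_dec 0 n) as [Hn|Hn].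
  - pose proof (Series_ge_term (Z.to_nat n) _ (fun m => Hf _) F1) as Hle; cbv beta in Hle.
    rewrite Z2Nat.id in Hle by exact Hn; lra.
  - pose proof (Series_ge_term (Z.to_nat (- n - 1)) _ (fun m => Hf _) F2) as Hle; cbv beta in Hle.
    replace (- Z.of_nat (S (Z.to_nat (- n - 1))))%Z with n in Hle by lia; lra.
Qed.

Lemma abspow_0 (s : R) : abspow 0 s = 0.
Proof. unfold abspow; destruct (Req_EM_T 0 0); [reflexivity|lra]. Qed.

Lemma abspow_neq0 (x s : R) : x <> 0 -> abspow x s = Rpower (Rabs x) s.
Proof. intros Hx; unfold abspow; destruct (Req_EM_T x 0); [contradiction|reflexivity]. Qed.

Lemma abspow_pos (x s : R) : x <> 0 -> 0 < abspow x s.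
Proof. intros Hx; rewrite abspow_neq0 by exact Hx; apply exp_pos. Qed.

Lemma abspow_nonneg (x s : R) : 0 <= abspow x s.
Proof.
  destruct (Req_EM_T x 0) as [->|Hx]; [rewrite abspow_0; lra|].
  left; apply abspow_pos, Hx.
Qed.

Lemma ln_abspow (x s : R) : x <> 0 -> ln (abspow x s) = s * ln (Rabs x).
Proof. intros Hx; rewrite abspow_neq0 by exact Hx; apply ln_Rpower. Qed.

Lemma abspow_mult (x y s : R) : abspow (x * y) s = abspow x s * abspow y s.
Proof.
  destruct (Req_EM_T x 0) as [->|Hx]; [rewrite Rmult_0_l, !abspow_0; ring|].
  destruct (Req_EM_T y 0) as [->|Hy]; [rewrite Rmult_0_r, !abspow_0; ring|].
  rewrite !abspow_neq0 by (try apply Rmult_integral_contrapositive; auto).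
  rewrite Rabs_mult; symmetry; apply Rpower_mult_distr; apply Rabs_pos_lt; assumption.
Qed.

Lemma abspow_sub2_mul_sqr (x s : R) : abspow x (s - 2) * x * x = abspow x s.
Proof.
  destruct (Req_EM_T x 0) as [->|Hx]; [rewrite !abspow_0; ring|].
  rewrite !abspow_neq0 by exact Hx.
  replace s with (s - 2 + INR 2) at 2 by (simpl; ring).
  rewrite Rpower_plus, Rpower_pow by (apply Rabs_pos_lt, Hx).
  rewrite Rmult_assoc, pow2_abs; ring.
Qed.

Lemma abspow_invK (x p : R) : 0 <= x -> p <> 0 -> abspow (abspow x (1 / p)) p = x.
Proof.
  intros Hx Hp; destruct (Req_EM_T x 0) as [->|Hx0]; [rewrite !abspow_0; reflexivity|].
  rewrite abspow_neq0 by (apply Rgt_not_eq, abspow_pos, Hx0).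
  rewrite Rabs_pos_eq by (apply abspow_nonneg).
  rewrite abspow_neq0 by exact Hx0.
  rewrite Rpower_mult, Rabs_pos_eq by exact Hx.
  replace (1 / p * p) with 1 by (field; exact Hp).
  apply Rpower_1; lra.
Qed.

Lemma abspow_le_Rpower_mul (x p q K : R) :
  0 < p <= q -> abspow x p <= K ->
  abspow x q <= Rpower K ((q - p) / p) * abspow x p.
Proof.
  intros Hpq HxK; destruct (Req_EM_T x 0) as [->|Hx]; [rewrite !abspow_0; lra|].
  pose proof (abspow_pos x p Hx) as Hxp.
  rewrite !abspow_neq0 in * by exact Hx.
  replace q with (p * ((q - p) / p) + p) at 1 by (field; lra).
  rewrite Rpower_plus, <- Rpower_mult.
  apply Rmult_le_compat_r; [lra|].
  apply Rle_Rpower_l; [|lra].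
  apply Rmult_le_pos; [lra|]; left; apply Rinv_0_lt_compat; lra.
Qed.

Lemma exp_mul_one_sub_le (x : R) : exp x * (1 - x) <= 1.
Proof.
  pose proof (exp_pos x) as Hx.
  pose proof (exp_ineq1_le (- x)) as Hle; rewrite exp_Ropp in Hle.
  apply (Rmult_le_compat_l (exp x)) in Hle; [|lra].
  rewrite Rinv_r in Hle by lra; lra.
Qed.

Lemma Rpower_div_sub_le (t p q : R) :
  0 < t -> 0 < p < q -> Rpower t p / p - Rpower t q / q <= 1 / p - 1 / q.
Proof.
  intros Ht Hpq; unfold Rpower; set (s := ln t).
  assert (Hgrow : exp (p * s) * (1 + (q - p) * s) <= exp (q * s)).
  { replace (q * s) with (p * s + (q - p) * s) by ring; rewrite exp_plus.
    apply Rmult_le_compat_l; [left; apply exp_pos | apply exp_ineq1_le]. }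
  pose proof (exp_mul_one_sub_le (p * s)) as Hdecay.
  assert (Hqp : q * exp (p * s) - p * exp (q * s) <= q - p) by nra.
  apply (Rmult_le_reg_l (p * q)); [nra|].
  replace (p * q * (exp (p * s) / p - exp (q * s) / q))
    with (q * exp (p * s) - p * exp (q * s)) by (field; lra).
  replace (p * q * (1 / p - 1 / q)) with (q - p) by (field; lra).
  exact Hqp.
Qed.

Lemma fiber_le_at_one (p q r A C t : R) :
  0 < p < q -> 0 <= r -> 0 <= A -> 0 <= C ->
  abspow t p * (1 / p * A)
    + abspow t q * (r / (q * q) * C - 1 / q * (A + r * ln (Rabs t) * C))
  <= 1 / p * A + r / (q * q) * C - 1 / q * A.
Proof.
  intros Hpq Hr HA HC.
  assert (HrC : 0 <= r / (q * q) * C).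
  { apply Rmult_le_pos; [|exact HC].
    apply Rmult_le_pos; [exact Hr|]; left; apply Rinv_0_lt_compat; nra. }
  destruct (Req_EM_T t 0) as [->|Ht].
  - assert (1 / q * A <= 1 / p * A).
    { apply Rmult_le_compat_r; [exact HA|].
      apply Rmult_le_compat_l; [lra|]; apply Rinv_le_contravar; lra. }
    rewrite !abspow_0; lra.
  - rewrite !abspow_neq0 by exact Ht.
    pose proof (Rabs_pos_lt t Ht) as Hy; set (y := Rabs t) in *.
    pose proof (Rpower_div_sub_le y p q Hy Hpq) as Hpart.
    pose proof (exp_mul_one_sub_le (q * ln y)) as Hqpart; fold (Rpower y q) in Hqpart.
    assert (HAneg : A * (Rpower y p / p - Rpower y q / q - (1 / p - 1 / q)) <= 0)
      by (apply Rmult_le_0_l; lra).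
    assert (HCneg : r / (q * q) * C * (Rpower y q * (1 - q * ln y) - 1) <= 0)
      by (apply Rmult_le_0_l; lra).
    replace (Rpower y p * (1 / p * A)
               + Rpower y q * (r / (q * q) * C - 1 / q * (A + r * ln y * C)))
      with (1 / p * A + r / (q * q) * C - 1 / q * A
            + A * (Rpower y p / p - Rpower y q / q - (1 / p - 1 / q))
            + r / (q * q) * C * (Rpower y q * (1 - q * ln y) - 1)) by (field; lra).
    lra.
Qed.

Section Functional.
Variables (p q r : R) (a b c : Z -> R).

Lemma normE_integrand_nonneg (u : Z -> R) (n : Z) :
  0 <= a n -> 0 <= b n -> 0 <= normE_integrand p a b u n.
Proof.
  intros Ha Hb; unfold normE_integrand.
  pose proof (abspow_nonneg (Defs.Delta u n) p); pose proof (abspow_nonneg (u n) p); nra.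
Qed.

Lemma normE_integrand_scale (t : R) (u : Z -> R) (n : Z) :
  normE_integrand p a b (scaleZ t u) n = abspow t p * normE_integrand p a b u n.
Proof.
  unfold normE_integrand, Defs.Delta, scaleZ.
  rewrite <- Rmult_minus_distr_l, !abspow_mult; ring.
Qed.

Lemma logterm_scale (t : R) (u : Z -> R) (n : Z) :
  logterm q r c (scaleZ t u) n
  = abspow t q * (logterm q r c u n + r * ln (Rabs t) * (c n * abspow (u n) q)).
Proof.
  unfold logterm, scaleZ.
  destruct (Req_EM_T t 0) as [->|Ht]; [rewrite abspow_0; destruct Req_EM_T; lra|].
  destruct (Req_EM_T (u n) 0) as [Hu|Hu].
  - rewrite Hu, Rmult_0_r, abspow_0; destruct Req_EM_T; lra.
  - destruct (Req_EM_T (t * u n) 0) as [Htu|Htu].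
    + apply Rmult_integral in Htu; tauto.
    + rewrite !abspow_mult, ln_mult by (apply abspow_pos; assumption).
      rewrite ln_abspow by exact Ht; ring.
Qed.

Lemma Iprime_diag (u : Z -> R) :
  Iprime p q r a b c u u = sumZ (normE_integrand p a b u) - sumZ (logterm q r c u).
Proof.
  unfold Iprime; f_equal; apply sumZ_ext; intros n.
  - unfold normE_integrand.
    rewrite <- (abspow_sub2_mul_sqr (Defs.Delta u n) p), <- (abspow_sub2_mul_sqr (u n) p); ring.
  - unfold logterm; destruct Req_EM_T; [reflexivity|].
    rewrite <- (abspow_sub2_mul_sqr (u n) q); ring.
Qed.

Lemma Ifun_eq (u : Z -> R) :
  p <> 0 -> (forall n, 0 <= a n) -> (forall n, 0 <= b n) -> inE p a b u ->
  Ifun p q r a b c u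
  = 1 / p * sumZ (normE_integrand p a b u)
    + r / (q * q) * sumZ (fun n => c n * abspow (u n) q)
    - 1 / q * sumZ (logterm q r c u).
Proof.
  intros Hp Ha Hb HE; unfold Ifun, normE.
  rewrite abspow_invK by (try apply sumZ_nonneg; auto using normE_integrand_nonneg).
  reflexivity.
Qed.

Lemma inE_summable_c_abspow (b0 c0 : R) (u : Z -> R) :
  0 < p <= q -> 0 < b0 -> (forall n, b0 <= b n) -> (forall n, 0 <= a n) ->
  (forall n, 0 <= c n <= c0) ->
  inE p a b u -> summableZ (fun n => c n * abspow (u n) q).
Proof.
  intros Hpq Hb0 Hb Ha Hc HE.
  set (N := normE_integrand p a b u) in HE.
  assert (HN : forall n, 0 <= N n)
    by (intros n; apply normE_integrand_nonneg; [|pose proof (Hb n); lra]; apply Ha).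
  assert (HbN : forall n, b0 * abspow (u n) p <= N n).
  { intros n; unfold N, normE_integrand; pose proof (Hb n); pose proof (Ha n).
    pose proof (abspow_nonneg (Defs.Delta u n) p); pose proof (abspow_nonneg (u n) p); nra. }
  set (M := Rpower (sumZ N / b0) ((q - p) / p)).
  assert (HM : 0 < M) by apply exp_pos.
  apply (summableZ_le _ (fun n => c0 * M / b0 * N n)).
  - intros n.
    assert (Hup : abspow (u n) p <= sumZ N / b0).
    { apply (Rmult_le_reg_l b0); [exact Hb0|].
      replace (b0 * (sumZ N / b0)) with (sumZ N) by (field; lra).
      pose proof (sumZ_ge_term N n HN HE); pose proof (HbN n); lra. }
    pose proof (abspow_le_Rpower_mul (u n) p q _ Hpq Hup) as Huq; fold M in Huq.
    pose proof (Hc n); pose proof (HbN n); pose proof (abspow_nonneg (u n) p).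
    pose proof (abspow_nonneg (u n) q); pose proof (HN n).
    rewrite !Rabs_pos_eq.
    + apply (Rle_trans _ (c0 * (M * abspow (u n) p))).
      * apply Rmult_le_compat; lra.
      * replace (c0 * M / b0 * N n) with (c0 * (M * (N n / b0))) by (field; lra).
        apply Rmult_le_compat_l; [lra|]; apply Rmult_le_compat_l; [lra|].
        apply (Rmult_le_reg_l b0); [exact Hb0|].
        replace (b0 * (N n / b0)) with (N n) by (field; lra); exact (HbN n).
    + apply Rmult_le_pos; [|lra]; apply Rmult_le_pos; [nra|].
      left; apply Rinv_0_lt_compat, Hb0.
    + nra.
  - apply summableZ_scal, HE.
Qed.

Lemma inE_scale (t : R) (u : Z -> R) : inE p a b u -> inE p a b (scaleZ t u).
Proof.
  intros HE; apply (summableZ_ext (fun n => abspow t p * normE_integrand p a b u n)).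
  - intros n; symmetry; apply normE_integrand_scale.
  - apply summableZ_scal, HE.
Qed.

Lemma inD_scale (t : R) (u : Z -> R) :
  inD p q r a b c u -> summableZ (fun n => c n * abspow (u n) q) ->
  inD p q r a b c (scaleZ t u).
Proof.
  intros [HE HL] Hcq; split; [apply inE_scale, HE|].
  eapply summableZ_ext; [intros n; symmetry; apply logterm_scale|].
  apply summableZ_scal, summableZ_plus; [exact HL|].
  apply summableZ_scal, Hcq.
Qed.

Lemma Ifun_scale (t : R) (u : Z -> R) :
  p <> 0 -> (forall n, 0 <= a n) -> (forall n, 0 <= b n) ->
  inD p q r a b c u -> summableZ (fun n => c n * abspow (u n) q) ->
  Ifun p q r a b c (scaleZ t u)
  = abspow t p * (1 / p * sumZ (normE_integrand p a b u))
    + abspow t q * (r / (q * q) * sumZ (fun n => c n * abspow (u n) q)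
                    - 1 / q * (sumZ (logterm q r c u)
                               + r * ln (Rabs t) * sumZ (fun n => c n * abspow (u n) q))).
Proof.
  intros Hp Ha Hb [HE HL] Hcq.
  rewrite Ifun_eq by (try apply inE_scale; assumption).
  rewrite (sumZ_ext _ _ (normE_integrand_scale t u)), (sumZ_ext _ _ (logterm_scale t u)).
  rewrite (sumZ_ext (fun n => c n * abspow (scaleZ t u n) q)
                    (fun n => abspow t q * (c n * abspow (u n) q)))
    by (intros n; unfold scaleZ; rewrite abspow_mult; ring).
  rewrite !sumZ_scal.
  rewrite (sumZ_plus (logterm q r c u) (fun n => r * ln (Rabs t) * (c n * abspow (u n) q)))
    by (try apply summableZ_scal; assumption).
  rewrite sumZ_scal; ring.
Qed.

End Functional.

Theorem corollary2p5 (p q r : R) (a b c : Z -> R)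
  (Hp : 1 < p) (Hpq : p < q) (Hpeven : exists k : nat, (1 <= k)%nat /\ p = 2 * INR k)
  (Hr : 1 <= r)
  (Ha : forall n, 0 < a n) (Hb : forall n, 0 < b n) (Hc : forall n, 0 < c n)
  (* (C1) *)
  (HC1 : (exists b0, 0 < b0 /\ forall n, b0 <= b n) /\
         (forall M, exists N : Z, forall n : Z, (N <= Z.abs n)%Z -> M <= b n))
  (* (C2) *)
  (HC2 : (exists c0, 0 < c0 /\ forall n, c n <= c0) /\ summableZ c) :
  forall u : Z -> R, inNehari p q r a b c u ->
    forall t : R, 0 <= t ->
      inD p q r a b c (scaleZ t u) /\
      Ifun p q r a b c (scaleZ t u) <= Ifun p q r a b c u.
Proof.
  intros u [[HE HL] [_ HI]] t _.
  destruct HC1 as [[b0 [Hb0 Hbb]] _], HC2 as [[c0 [_ Hcc]] _].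
  assert (Ha_nonneg : forall n, 0 <= a n) by (intros n; left; apply Ha).
  assert (Hb_nonneg : forall n, 0 <= b n) by (intros n; left; apply Hb).
  assert (Hcq : summableZ (fun n => c n * abspow (u n) q)).
  { apply (inE_summable_c_abspow p q a b c b0 c0); try assumption; [lra|].
    intros n; split; [left|]; auto. }
  assert (Hnehari : sumZ (logterm q r c u) = sumZ (normE_integrand p a b u))
    by (rewrite Iprime_diag in HI; lra).
  split; [apply inD_scale; [split|]; assumption|].
  assert (Hp0 : p <> 0) by lra.
  rewrite Ifun_scale, Ifun_eq, Hnehari by (first [assumption | split; assumption]).
  apply fiber_le_at_one; [lra | lra | |].
  - apply sumZ_nonneg; [|exact HE]; intros n; apply normE_integrand_nonneg; auto.
  - apply sumZ_nonneg; [|exact Hcq]; intros n.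
    pose proof (Hc n); pose proof (abspow_nonneg (u n) q); nra.
Qed.
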